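(* Under the hypotheses and notation of the mass scaling of Olovsson et al. (element matrices $\overline{M}_e=I_3\otimes\bigl(\frac{m_e}{8}I_8+\frac{\beta m_e}{56}(8I_8-\mathbf{e}\mathbf{e}^T)\bigr)$, $\beta\ge0$, $m_e>0$, assembled as $\overline{M}=\sum_eL_e^T\overline{M}_eL_e$), one has $$\kappa(\overline{M})\le p_{\max}\Bigl(1+\tfrac{8}{7}\beta\Bigr)\frac{\max_e m_e}{\min_e m_e},$$ where $p_{\max}$ is the maximum, over global degrees of freedom $i$, of the number of elements $e$ whose index set $\{i_1,\dots,i_m\}$ contains $i$.
   Context: Finite element setting: $n$ global degrees of freedom, $N$ elements, $m=24$ local degrees of freedom per element; for each element $e$, $L_e\in\mathbb{R}^{m\times n}$ satisfies $L_e^T=[\mathbf{e}_{i_1},\dots,\mathbf{e}_{i_m}]$ for distinct indices (columns of $I_n$), and every global index appears for at least one element. $\mathbf{e}\in\mathbb{R}^8$ is the all-ones vector, $\otimes$ the Kronecker product, and $\kappa(A)=\lambda_{\max}(A)/\lambda_{\min}(A)$ for symmetric positive definite $A$. *)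

From HB Require Import structures.
From mathcomp Require Import all_boot all_order all_algebra.
From mathcomp Require Import classical_sets reals.
From mathcomp Require Import mxtens.
Set Implicit Arguments. Unset Strict Implicit. Unset Printing Implicit Defensive.
Import Order.TTheory GRing.Theory Num.Theory.
Local Open Scope ring_scope.

Notation mloc := 24%N.

(* Boolean (0/1) localization matrix L_e : rows are e_{i_1}^T, ..., e_{i_m}^T,
   where dofs k = i_{k+1}. *)
Definition locmx (R : pzRingType) (n : nat) (dofs : 'I_mloc -> 'I_n) : 'M[R]_(mloc, n) :=
  \matrix_(k, j) ((dofs k == j)%:R).

Definition ones8 (R : pzRingType) : 'cV[R]_8 := const_mx 1.

Definition elem_mass (R : fieldType) (beta me : R) : 'M[R]_(3 * 8) :=
  (1%:M : 'M[R]_3) *t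
    ((me / 8) *: (1%:M : 'M[R]_8)
     + (beta * me / 56) *: (8%:R *: (1%:M : 'M[R]_8) - ones8 R *m (ones8 R)^T)).

Definition assembled (R : fieldType) (n N : nat) (dofs : 'I_N -> 'I_mloc -> 'I_n)
  (beta : R) (me : 'I_N -> R) : 'M[R]_n :=
  \sum_(e < N) ((locmx R (dofs e))^T *m (elem_mass beta (me e) : 'M[R]_mloc) *m locmx R (dofs e)).

Definition spd (R : realFieldType) (n : nat) (A : 'M[R]_n) : Prop :=
  A^T = A /\ forall x : 'cV[R]_n, x != 0 -> 0 < (x^T *m A *m x) 0 0.

Definition lambda_max (R : realType) (n : nat) (A : 'M[R]_n) : R :=
  sup [set a : R | eigenvalue A a].
Definition lambda_min (R : realType) (n : nat) (A : 'M[R]_n) : R :=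
  inf [set a : R | eigenvalue A a].
Definition kappa (R : realType) (n : nat) (A : 'M[R]_n) : R :=
  lambda_max A / lambda_min A.

Definition p_max (n N : nat) (dofs : 'I_N -> 'I_mloc -> 'I_n) : nat :=
  \max_(i < n) #|[set e : 'I_N | [exists k, dofs e k == i]]|.

From HB Require Import structures.
From mathcomp Require Import all_boot all_order all_algebra.
From mathcomp Require Import classical_sets reals.
From mathcomp Require Import mxtens.
From mathcomp Require Import ring.

(* With G = 8 I_8 - e e^T one has G^2 = 8 G, so G / 8 is an orthogonal
   projector and 0 <= y^T (I_3 (x) G) y <= 8 |y|^2.  Hence every element matrix
   has its Rayleigh quotient in [m_e / 8, (1 + 8 beta / 7) m_e / 8].  Summing
   over the elements, sum_e |L_e x|^2 = sum_i p_i x_i^2 with 1 <= p_i <= p_max,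
   so the Rayleigh quotient of the assembled matrix lies in
   [min m_e / 8, p_max (1 + 8 beta / 7) max m_e / 8], and so does its spectrum. *)

Set Implicit Arguments.
Unset Strict Implicit.
Unset Printing Implicit Defensive.

Import Order.TTheory GRing.Theory Num.Theory.
Local Open Scope ring_scope.

Section QuadraticForm.
Variable R : realFieldType.

Definition qform k (A : 'M[R]_k) (x : 'cV[R]_k) : R := (x^T *m A *m x) 0 0.

Lemma qformD k (A B : 'M[R]_k) x : qform (A + B) x = qform A x + qform B x.
Proof. by rewrite /qform mulmxDr mulmxDl mxE. Qed.

Lemma qformZ k (c : R) (A : 'M[R]_k) x : qform (c *: A) x = c * qform A x.
Proof. by rewrite /qform -scalemxAr -scalemxAl mxE. Qed.

Lemma qformB k (A B : 'M[R]_k) x : qform (A - B) x = qform A x - qform B x.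
Proof. by rewrite -scaleN1r qformD qformZ mulN1r. Qed.

Lemma qform1 k (x : 'cV[R]_k) : qform 1%:M x = \sum_i x i 0 ^+ 2.
Proof. by rewrite /qform mulmx1 mxE; apply: eq_bigr => i _; rewrite !mxE expr2. Qed.

Lemma qform1_ge0 k (x : 'cV[R]_k) : 0 <= qform 1%:M x.
Proof. by rewrite qform1 sumr_ge0 // => i _; rewrite sqr_ge0. Qed.

Lemma qform1_gt0 k (x : 'cV[R]_k) : x != 0 -> 0 < qform 1%:M x.
Proof.
case/matrix0Pn => i [j]; rewrite [j]ord1 => xi_neq0.
rewrite qform1 (bigD1 i) //= ltr_pwDl ?sumr_ge0 ?exprn_even_gt0 // => l _; exact: sqr_ge0.
Qed.

Lemma qform_gram_ge0 p k (P : 'M[R]_(p, k)) x : 0 <= qform (P^T *m P) x.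
Proof.
rewrite /qform !mulmxA -mulmxA -trmx_mul mxE.
by apply: sumr_ge0 => i _; rewrite mxE -expr2 sqr_ge0.
Qed.

Lemma qform_scaled_proj_ge0 k (c : R) (P : 'M[R]_k) x :
  0 < c -> P^T = P -> P *m P = c *: P -> 0 <= qform P x.
Proof.
move=> c_gt0 P_sym P_sqr.
have -> : P = c^-1 *: (P^T *m P).
  rewrite P_sym P_sqr scalerA mulVf ?gt_eqF ?scale1r //.
by rewrite qformZ mulr_ge0 ?invr_ge0 ?qform_gram_ge0 // ltW.
Qed.

Lemma qform_scaled_proj_le k (c : R) (P : 'M[R]_k) x :
  0 < c -> P^T = P -> P *m P = c *: P -> qform P x <= c * qform 1%:M x.
Proof.
move=> c_gt0 P_sym P_sqr.
have := @qform_scaled_proj_ge0 _ c (c *: 1%:M - P) x c_gt0.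
rewrite qformB qformZ subr_ge0; apply.
  by rewrite linearB /= linearZ /= trmx1 P_sym.
rewrite mulmxBl !mulmxBr -!scalemxAl -!scalemxAr !mul1mx mulmx1 P_sqr.
by rewrite subrr subr0 scalerBr scalerA.
Qed.

End QuadraticForm.

Section Kronecker.
Variable R : comPzRingType.

Lemma tensmxDr m n p q (A : 'M[R]_(m, n)) (B C : 'M[R]_(p, q)) :
  A *t (B + C) = A *t B + A *t C.
Proof. by apply/matrixP => i j; rewrite !mxE mulrDr. Qed.

Lemma tensmxZr m n p q c (A : 'M[R]_(m, n)) (B : 'M[R]_(p, q)) :
  A *t (c *: B) = c *: (A *t B).
Proof. by apply/matrixP => i j; rewrite !mxE mulrCA. Qed.

Lemma tensmx11 m p : (1%:M : 'M[R]_m) *t (1%:M : 'M[R]_p) = 1%:M.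
Proof.
apply/matrixP => i j.
case: (mxtens_indexP i) => i0 i1; case: (mxtens_indexP j) => j0 j1.
rewrite tensmxE !mxE (inj_eq (can_inj (@mxtens_indexK _ _))) xpair_eqE.
by case: (i0 == j0); case: (i1 == j1); rewrite ?mulr1 ?mulr0.
Qed.

End Kronecker.

Section ElementMatrix.
Variable R : realFieldType.

Definition centering8 : 'M[R]_8 := 8%:R *: 1%:M - ones8 R *m (ones8 R)^T.

Lemma ones8_gram : (ones8 R)^T *m ones8 R = 8%:R%:M.
Proof.
apply/matrixP => i j; rewrite [i]ord1 [j]ord1 !mxE.
by rewrite (eq_bigr (fun _ => 1)) ?sumr_const ?card_ord // => k _; rewrite !mxE mulr1.
Qed.

Lemma centering8T : centering8^T = centering8.
Proof. by rewrite linearB /= linearZ /= trmx1 trmx_mul trmxK. Qed.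

Lemma centering8_sqr : centering8 *m centering8 = 8%:R *: centering8.
Proof.
rewrite mulmxBl !mulmxBr -!scalemxAl -!scalemxAr !mul1mx !mulmx1.
rewrite mulmxA -[ones8 R *m _ *m _]mulmxA ones8_gram mul_mx_scalar -scalemxAl.
by rewrite scalerBr subrr subr0.
Qed.

Lemma tens1_centering8T k :
  ((1%:M : 'M_k) *t centering8)^T = 1%:M *t centering8.
Proof. by rewrite trmx_tens trmx1 centering8T. Qed.

Lemma tens1_centering8_sqr k :
  ((1%:M : 'M_k) *t centering8) *m (1%:M *t centering8)
  = 8%:R *: (1%:M *t centering8).
Proof. by rewrite tensmx_mul mulmx1 centering8_sqr tensmxZr. Qed.

Lemma elem_massE (beta me : R) :
  elem_mass beta me
  = (me / 8) *: 1%:M + (beta * me / 56) *: ((1%:M : 'M_3) *t centering8).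
Proof. by rewrite /elem_mass tensmxDr !tensmxZr tensmx11. Qed.

Lemma elem_massT (beta me : R) : (elem_mass beta me)^T = elem_mass beta me.
Proof. by rewrite elem_massE linearD /= !linearZ /= trmx1 tens1_centering8T. Qed.

Lemma elem_mass_qform_bounds (beta me : R) y : 0 <= beta -> 0 <= me ->
  me / 8 * qform 1%:M y <= qform (elem_mass beta me) y
                        <= me / 8 * (1 + 8 / 7 * beta) * qform 1%:M y.
Proof.
move=> beta_ge0 me_ge0; rewrite elem_massE qformD !qformZ.
have P_sym := tens1_centering8T 3; have P_sqr := tens1_centering8_sqr 3.
have c_gt0 : (0 : R) < 8%:R by rewrite ltr0n.
have P_ge0 := qform_scaled_proj_ge0 y c_gt0 P_sym P_sqr.
have P_le := qform_scaled_proj_le y c_gt0 P_sym P_sqr.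
have w_ge0 : 0 <= beta * me / 56 by rewrite !mulr_ge0 ?invr_ge0 ?ler0n.
rewrite lerDl mulr_ge0 //=.
have -> : me / 8 * (1 + 8 / 7 * beta) * qform 1%:M y
          = me / 8 * qform 1%:M y + beta * me / 56 * (8%:R * qform 1%:M y) by field.
by rewrite lerD2l ler_wpM2l.
Qed.

End ElementMatrix.

Section Localization.
Variables (R : pzRingType) (n N : nat) (dofs : 'I_N -> 'I_mloc -> 'I_n).

Definition dof_mult (i : 'I_n) : nat := #|[set e : 'I_N | [exists k, dofs e k == i]]|.

Lemma dof_mult_le_p_max i : (dof_mult i <= p_max dofs)%N.
Proof. exact: (@leq_bigmax _ dof_mult). Qed.

Lemma dof_mult_gt0 i : (exists e k, dofs e k = i) -> (0 < dof_mult i)%N.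
Proof.
case=> e [k dofs_ek]; rewrite card_gt0; apply/set0Pn; exists e.
by rewrite inE; apply/existsP; exists k; rewrite dofs_ek.
Qed.

Lemma locmx_mulE (d : 'I_mloc -> 'I_n) (x : 'cV[R]_n) k :
  (locmx R d *m x) k 0 = x (d k) 0.
Proof.
rewrite mxE (bigD1 (d k)) //= big1 ?addr0 => [|j /negPf dk_neq_j].
  by rewrite mxE eqxx mul1r.
by rewrite mxE eq_sym dk_neq_j mul0r.
Qed.

Lemma sum_local_dofs (f : 'I_n -> R) : (forall e, injective (dofs e)) ->
  \sum_e \sum_k f (dofs e k) = \sum_i (dof_mult i)%:R * f i.
Proof.
move=> dofs_inj.
have local_sum e : \sum_k f (dofs e k) = \sum_i ([exists k, dofs e k == i])%:R * f i.
  rewrite -(big_imset _ (in2W (dofs_inj e))) big_mkcond /=.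
  apply: eq_bigr => i _; rewrite mulr_natl.
  have -> : (i \in [set dofs e k | k in predT]) = [exists k, dofs e k == i].
    apply/imsetP/existsP => [[k _ ->]|[k /eqP <-]]; by exists k.
  by case: existsP; rewrite ?mulr1n ?mulr0n.
rewrite (eq_bigr _ (fun e _ => local_sum e)) exchange_big; apply: eq_bigr => i _.
rewrite -mulr_suml /dof_mult -sum1_card natr_sum [in RHS]big_mkcond /=.
by congr (_ * _); apply: eq_bigr => e _; rewrite inE; case: existsP.
Qed.

End Localization.

Section Assembly.
Variables (R : realFieldType) (n N : nat) (dofs : 'I_N -> 'I_mloc -> 'I_n).

Lemma qform_assembled (beta : R) me x :
  qform (assembled dofs beta me) x
  = \sum_e qform (elem_mass beta (me e) : 'M_mloc) (locmx R (dofs e) *m x).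
Proof.
rewrite /qform /assembled mulmx_sumr mulmx_suml summxE; apply: eq_bigr => e _.
by rewrite trmx_mul !mulmxA.
Qed.

Lemma assembledT (beta : R) me :
  (assembled dofs beta me)^T = assembled dofs beta me.
Proof.
rewrite /assembled linear_sum; apply: eq_bigr => e _.
by rewrite /= !trmx_mul trmxK elem_massT mulmxA.
Qed.

Lemma sum_local_qform1_bounds (p : nat) (x : 'cV[R]_n) :
  (forall e, injective (dofs e)) ->
  (forall i, 0 < dof_mult dofs i)%N -> (forall i, dof_mult dofs i <= p)%N ->
  qform 1%:M x <= \sum_e qform 1%:M (locmx R (dofs e) *m x) <= p%:R * qform 1%:M x.
Proof.
move=> dofs_inj mult_gt0 mult_le.
have -> : \sum_e qform 1%:M (locmx R (dofs e) *m x)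
          = \sum_i (dof_mult dofs i)%:R * x i 0 ^+ 2.
  rewrite -(sum_local_dofs (fun i => x i 0 ^+ 2)) //.
  by apply: eq_bigr => e _; rewrite qform1; apply: eq_bigr => k _; rewrite locmx_mulE.
rewrite qform1 mulr_sumr; apply/andP; split; apply: ler_sum => i _.
  by rewrite ler_peMl ?sqr_ge0 // ler1n.
by rewrite ler_wpM2r ?sqr_ge0 // ler_nat.
Qed.

Lemma assembled_qform_bounds (beta m0 M0 : R) me (p : nat) (x : 'cV[R]_n) :
  (forall e, injective (dofs e)) ->
  (forall i, 0 < dof_mult dofs i)%N -> (forall i, dof_mult dofs i <= p)%N ->
  0 <= beta -> 0 <= m0 <= M0 -> (forall e, m0 <= me e <= M0) ->
  m0 / 8 * qform 1%:M x <= qform (assembled dofs beta me) x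
                        <= M0 / 8 * (1 + 8 / 7 * beta) * p%:R * qform 1%:M x.
Proof.
move=> dofs_inj mult_gt0 mult_le beta_ge0 /andP[m0_ge0 m0_le_M0] me_bounds.
have /andP[norm_lo norm_hi] := sum_local_qform1_bounds x dofs_inj mult_gt0 mult_le.
have K_ge0 : 0 <= 1 + 8 / 7 * beta by rewrite addr_ge0 // mulr_ge0 // divr_ge0.
have me_ge0 e : 0 <= me e by have /andP[/(le_trans m0_ge0)] := me_bounds e.
rewrite qform_assembled; apply/andP; split.
  apply: le_trans (ler_wpM2l _ norm_lo) _; first by rewrite divr_ge0.
  rewrite mulr_sumr; apply: ler_sum => e _.
  have /andP[me_lo _] := me_bounds e.
  have /andP[elem_lo _] :=
    elem_mass_qform_bounds (locmx R (dofs e) *m x) beta_ge0 (me_ge0 e).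
  apply: le_trans elem_lo.
  by rewrite ler_wpM2r ?qform1_ge0 // ler_pM2r ?invr_gt0 ?ltr0n.
rewrite -mulrA; apply: le_trans (ler_wpM2l _ norm_hi); last first.
  by rewrite !mulr_ge0 ?invr_ge0 ?ler0n // (le_trans m0_ge0).
rewrite mulr_sumr; apply: ler_sum => e _.
have /andP[_ me_hi] := me_bounds e.
have /andP[_ elem_hi] :=
  elem_mass_qform_bounds (locmx R (dofs e) *m x) beta_ge0 (me_ge0 e).
apply: (le_trans elem_hi); rewrite ler_wpM2r ?qform1_ge0 // ler_wpM2r //.
by rewrite ler_pM2r ?invr_gt0 ?ltr0n.
Qed.

End Assembly.

Local Open Scope classical_set_scope.

Section Spectrum.
Variables (R : realType) (n : nat) (A : 'M[R]_n).

Lemma cV_dim0 (x : 'cV[R]_n) : n = 0%N -> x = 0.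
Proof. by move=> n0; apply/matrixP => i; have := ltn_ord i; rewrite {2}n0. Qed.

Lemma kappa_dim0 : n = 0%N -> kappa A = 0.
Proof.
move=> n0; rewrite /kappa /lambda_max.
have -> : [set a : R | eigenvalue A a] = set0.
  apply/seteqP; split=> // a /eigenvalueP [v _].
  by rewrite -trmx_eq0 (cV_dim0 v^T n0) eqxx.
by rewrite sup0 mul0r.
Qed.

Lemma eigenvalue_qform_bounds (lo hi a : R) :
  (forall x, lo * qform 1%:M x <= qform A x <= hi * qform 1%:M x) ->
  eigenvalue A a -> lo <= a <= hi.
Proof.
move=> A_bounds /eigenvalueP [v vA_eq v_neq0].
have v_gt0 : 0 < qform 1%:M v^T by rewrite qform1_gt0 ?trmx_eq0.
have qform_v : qform A v^T = a * qform 1%:M v^T.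
  by rewrite /qform trmxK vA_eq -scalemxAl mulmx1 mxE.
by have := A_bounds v^T; rewrite qform_v !ler_pM2r.
Qed.

Lemma spd_qform_lb (lo : R) : A^T = A -> 0 < lo ->
  (forall x, lo * qform 1%:M x <= qform A x) -> spd A.
Proof.
move=> A_sym lo_gt0 A_lb; split=> // x x_neq0.
by apply: lt_le_trans (A_lb x); rewrite mulr_gt0 ?qform1_gt0.
Qed.

Lemma kappa_le_qform_ratio (lo hi : R) : 0 < lo -> 0 <= hi ->
  (forall x, lo * qform 1%:M x <= qform A x <= hi * qform 1%:M x) ->
  kappa A <= hi / lo.
Proof.
move=> lo_gt0 hi_ge0 A_bounds; rewrite /kappa /lambda_max /lambda_min.
set E := [set a : R | eigenvalue A a].
have E_bounds a : E a -> lo <= a <= hi := eigenvalue_qform_bounds A_bounds.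
have [-> | /set0P [a0 Ea0]] := eqVneq E set0.
  by rewrite sup0 mul0r divr_ge0 // ltW.
have sup_le : sup E <= hi.
  by apply: ge_sup; [exists a0 | by move=> a /E_bounds /andP[]].
have inf_ge : lo <= inf E.
  by apply: lb_le_inf; [exists a0 | by move=> a /E_bounds /andP[]].
have inf_gt0 : 0 < inf E by apply: lt_le_trans inf_ge.
rewrite ler_pdivrMr //; apply: le_trans sup_le _.
rewrite -mulrA ler_peMr //.
by rewrite mulrC ler_pdivlMr // mul1r.
Qed.

End Spectrum.

Section FiniteRange.
Variables (R : realType) (T : finType) (f : T -> R).

Lemma range_has_lbound (t : T) : has_lbound (range f).
Proof.
have [s _ s_min] := @arg_minP _ _ _ t xpredT f isT.
by exists (f s) => _ [u _ <-]; apply: s_min.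
Qed.

Lemma range_has_ubound (t : T) : has_ubound (range f).
Proof.
have [s _ s_max] := @arg_maxP _ _ _ t xpredT f isT.
by exists (f s) => _ [u _ <-]; apply: s_max.
Qed.

Lemma inf_range_le t : inf (range f) <= f t.
Proof. by apply: (ge_inf (range_has_lbound t)); exists t. Qed.

Lemma le_sup_range t : f t <= sup (range f).
Proof. by apply: (ub_le_sup (range_has_ubound t)); exists t. Qed.

Lemma inf_range_gt0 (t : T) : (forall u, 0 < f u) -> 0 < inf (range f).
Proof.
move=> f_gt0; have [s _ s_min] := @arg_minP _ _ _ t xpredT f isT.
apply: lt_le_trans (f_gt0 s) _; apply: lb_le_inf; first by exists (f t), t.
by move=> _ [u _ <-]; apply: s_min.
Qed.

End FiniteRange.

Theorem mainTheorem9 (R : realType) (n N : nat)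
  (dofs : 'I_N -> 'I_mloc -> 'I_n)
  (beta : R) (me : 'I_N -> R)
  (Hinj : forall e : 'I_N, injective (dofs e))
  (Hcover : forall i : 'I_n, exists e : 'I_N, exists k : 'I_mloc, dofs e k = i)
  (Hbeta : 0 <= beta)
  (Hme : forall e : 'I_N, 0 < me e) :
  spd (assembled dofs beta me) /\
  kappa (assembled dofs beta me)
    <= (p_max dofs)%:R * (1 + 8 / 7 * beta) * (sup (range me) / inf (range me)).
Proof.
set A := assembled dofs beta me; have A_sym : A^T = A := assembledT dofs beta me.
have [N0 | N_gt0] := posnP N.
  (* An empty mesh covers no degree of freedom: n = 0 and both sides vanish. *)
  have n0 : n = 0%N.
    apply/eqP; rewrite -leqn0 leqNgt; apply/negP => n_gt0.
    by have [e _] := Hcover (Ordinal n_gt0); have := ltn_ord e; rewrite {2}N0.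
  have -> : range me = set0.
    by apply/seteqP; split=> // y [e]; have := ltn_ord e; rewrite {2}N0.
  split; first by split=> // x; rewrite (cV_dim0 x n0) eqxx.
  by rewrite kappa_dim0 // sup0 mul0r mulr0.
pose e0 := Ordinal N_gt0; set m0 := inf (range me); set M0 := sup (range me).
have m0_gt0 : 0 < m0 := inf_range_gt0 e0 Hme.
have me_bounds e : m0 <= me e <= M0 by rewrite inf_range_le le_sup_range.
have m0_le_M0 : m0 <= M0 := le_trans (inf_range_le me e0) (le_sup_range me e0).
have m0_bounds : 0 <= m0 <= M0 by rewrite (ltW m0_gt0) m0_le_M0.
have bounds := assembled_qform_bounds _ Hinj (fun i => dof_mult_gt0 (Hcover i))
  (dof_mult_le_p_max dofs) Hbeta m0_bounds me_bounds.
have lo_gt0 : 0 < m0 / 8 by rewrite divr_gt0.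
split; first exact: spd_qform_lb A_sym lo_gt0 (fun x => (andP (bounds x)).1).
have -> : (p_max dofs)%:R * (1 + 8 / 7 * beta) * (M0 / m0)
          = M0 / 8 * (1 + 8 / 7 * beta) * (p_max dofs)%:R / (m0 / 8).
  by field; rewrite gt_eqF.
apply: kappa_le_qform_ratio lo_gt0 _ bounds.
have K_ge0 : 0 <= 1 + 8 / 7 * beta by rewrite addr_ge0 // mulr_ge0 // divr_ge0.
have M0_ge0 : 0 <= M0 := le_trans (ltW m0_gt0) m0_le_M0.
by rewrite !mulr_ge0 ?invr_ge0 ?ler0n.
Qed.
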